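(* Given $\xi_2\in\mathbb{R}$, write $\xi_2=m+\theta$ with $m\in\mathbb{Z}$, $-\tfrac12\le\theta<\tfrac12$. Let $\eta>1$. Then there is a constant $C_\eta$ such that for all $f\in\mathcal S_\eta(\mathbb{R})$, all $y\ge\tfrac12$ and all $x,\phi\in\mathbb{R}$, $\xi_1\in\mathbb{R}$, $\zeta\in\mathbb{R}$, \[\Big|\Theta_f(x+iy,\phi;\xi,\zeta)-y^{1/4}e\Big(\zeta+\frac{(m-\theta)\xi_1+\theta^2x}{2}\Big)f_\phi(-\theta y^{1/2})\Big|\le C_\eta\,\kappa_\eta(f)\,y^{-(2\eta-1)/4}.\]
   Context: $e(x)=e^{2\pi ix}$, $\xi=(\xi_1,\xi_2)$. For $f:\mathbb{R}\to\mathbb{R}$ and $\phi\in\mathbb{R}$: $f_\phi=f$ if $\phi\equiv0\bmod2\pi$; $f_\phi(w)=e(-1/4)f(-w)$ if $\phi\equiv\pi\bmod2\pi$; otherwise $f_\phi(w)=e(-\sigma_\phi/8)|\sin\phi|^{-1/2}\int_\mathbb{R}e\big(\frac{\frac12(w^2+w'^2)\cos\phi-ww'}{\sin\phi}\big)f(w')dw'$ with $\sigma_\phi=2\nu+1$ for $\nu\pi<\phi<(\nu+1)\pi$, $\nu\in\mathbb{Z}$. $\kappa_\eta(f)=\sup_{w,\phi}|f_\phi(w)|(1+|w|)^\eta$ and $\mathcal S_\eta(\mathbb{R})=\{f:\mathbb{R}\to\mathbb{R}:\kappa_\eta(f)<\infty\}$. For $f\in\mathcal S_\eta$, $\eta>1$: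 $\Theta_f(x+iy,\phi;\xi,\zeta)=y^{1/4}e(\zeta-\tfrac12\xi_1\xi_2)\sum_{n\in\mathbb{Z}}f_\phi((n-\xi_2)y^{1/2})e(\tfrac12(n-\xi_2)^2x+n\xi_1)$. *)

From HB Require Import structures.
From mathcomp Require Import all_boot all_order all_algebra.
From mathcomp Require Import all_classical all_reals all_analysis.
From mathcomp Require Import complex.
Set Implicit Arguments. Unset Strict Implicit. Unset Printing Implicit Defensive.
Import Order.TTheory GRing.Theory Num.Theory.
Import numFieldNormedType.Exports.
Local Open Scope classical_set_scope.
Local Open Scope ring_scope.
Local Open Scope complex_scope.

Section Defs.
Variable R : realType.

Definition ee (x : R) : R[i] := (cos (2 * pi * x)) +i* (sin (2 * pi * x)).

Definition cRe (z : R[i]) : R := let: a +i* _ := z in a.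
Definition cIm (z : R[i]) : R := let: _ +i* b := z in b.
Definition cabs (z : R[i]) : R := Num.sqrt (cRe z ^+ 2 + cIm z ^+ 2).

Definition cintegral (g : R -> R[i]) : R[i] :=
  (Rintegral lebesgue_measure setT (fun t => cRe (g t)))
  +i* (Rintegral lebesgue_measure setT (fun t => cIm (g t))).

Definition sigma_phi (phi : R) : R := 2 * (Num.floor (phi / pi))%:~R + 1.

Definition frot (f : R -> R) (phi : R) (w : R) : R[i] :=
  if (phi / (2 * pi)) \is a Num.int then (f w)%:C
  else if ((phi - pi) / (2 * pi)) \is a Num.int then ee (- (1/4)) * (f (- w))%:C
  else ee (- (sigma_phi phi / 8)) * ((Num.sqrt `|sin phi|)^-1)%:C *
       cintegral (fun w' =>
         ee (((1/2) * (w ^+ 2 + w' ^+ 2) * cos phi - w * w') / sin phi)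
         * (f w')%:C).

Definition kappa (eta : R) (f : R -> R) : R :=
  sup [set r | exists w phi, r = cabs (frot f phi w) * (1 + `|w|) `^ eta].

Definition in_S (eta : R) (f : R -> R) : Prop :=
  exists M : R, forall w phi, cabs (frot f phi w) * (1 + `|w|) `^ eta <= M.

Definition psum (a : int -> R[i]) (N : nat) : R[i] :=
  \sum_(k < (2 * N).+1) a ((k : nat)%:Z - N%:Z)%R.

Definition zseries (a : int -> R[i]) : R[i] :=
  (lim ((fun N => cRe (psum a N)) @ \oo))
  +i* (lim ((fun N => cIm (psum a N)) @ \oo)).

Definition Theta (f : R -> R) (x y phi xi1 xi2 zeta : R) : R[i] :=
  (y `^ (1/4))%:C * ee (zeta - (1/2) * xi1 * xi2) *
  zseries (fun n => frot f phi ((n%:~R - xi2) * Num.sqrt y)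
                    * ee ((1/2) * (n%:~R - xi2) ^+ 2 * x + n%:~R * xi1)).

End Defs.

From mathcomp Require Import all_boot all_order all_algebra.
From mathcomp Require Import all_classical all_reals all_analysis.
From mathcomp Require Import complex.
From mathcomp Require Import ring lra zify.
Set Implicit Arguments. Unset Strict Implicit. Unset Printing Implicit Defensive.
Import Order.TTheory GRing.Theory Num.Theory.
Local Open Scope classical_set_scope.
Local Open Scope ring_scope.

(* Only the term n = m of the theta series is not small.  For n <> m the
   argument of f_phi is (n - m - theta) y^(1/2) with |n - m| >= 1 and
   |theta| <= 1/2, so the decay |f_phi(w)| <= kappa (1 + |w|)^-eta bounds the
   term by kappa 2^eta y^(-eta/2) |n - m|^-eta.  Since eta > 1 these bounds are
   summable, uniformly over the symmetric partial sums defining the series,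
   which gives both the convergence of the series and the error estimate. *)

Section InversePowerSums.
Variable R : realType.

Lemma ln_subD1_ge (t : R) : 0 < t -> (t + 1)^-1 <= ln (t + 1) - ln t.
Proof.
move=> t_gt0; have t1_gt0 : 0 < t + 1 by lra.
have := expR_ge1Dx (ln t - ln (t + 1)).
rewrite expRB !lnK ?posrE //.
have -> : t / (t + 1) = 1 - (t + 1)^-1 by field; lra.
lra.
Qed.

Lemma inv_powR_subD1_ge (s t : R) : 0 < s -> 0 < t ->
  s / (t + 1) / (t + 1) `^ s <= (t `^ s)^-1 - ((t + 1) `^ s)^-1.
Proof.
move=> s_gt0 t_gt0; have t1_gt0 : 0 < t + 1 by lra.
rewrite /powR !gt_eqF //.
set A := expR (s * ln t); set d := s * (ln (t + 1) - ln t).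
have -> : expR (s * ln (t + 1)) = A * expR d.
  by rewrite -expRD; congr expR; rewrite /d; ring.
have A_gt0 : 0 < A by apply: expR_gt0.
have d_gt0 : 0 < expR d by apply: expR_gt0.
have d_ge : s / (t + 1) <= d by apply: ler_wpM2l; [lra | exact: ln_subD1_ge].
have := expR_ge1Dx d.
rewrite -[_ <= _ - _]subr_ge0.
have -> : A^-1 - (A * expR d)^-1 - s / (t + 1) / (A * expR d) =
    (expR d - 1 - s / (t + 1)) / (A * expR d).
  by field; apply/and3P; split; rewrite gt_eqF.
by move=> ?; apply: divr_ge0; [lra | apply: mulr_ge0; lra].
Qed.

Lemma inv_powR_le_subD1 (eta t : R) : 1 < eta -> 1 <= t ->
  (t `^ eta)^-1 <= 2 `^ eta / (eta - 1) *
     ((t `^ (eta - 1))^-1 - ((t + 1) `^ (eta - 1))^-1).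
Proof.
move=> eta_gt1 t_ge1.
have := @inv_powR_subD1_ge (eta - 1) t ltac:(lra) ltac:(lra).
set D := (_^-1 - _^-1) => D_ge.
have eX : (t + 1) `^ eta = (t + 1) `^ (eta - 1) * (t + 1).
  rewrite -{3}(@powRr1 _ (t + 1)); last lra.
  by rewrite -powRD ?subrK //; apply/implyP => _; rewrite gt_eqF //; lra.
set X := (t + 1) `^ eta; set Y := t `^ eta; set P := 2 `^ eta.
have X_gt0 : 0 < X by apply: powR_gt0; lra.
have Y_gt0 : 0 < Y by apply: powR_gt0; lra.
have P_gt0 : 0 < P by apply: powR_gt0; lra.
have XY : X <= P * Y.
  rewrite /P /Y -powRM; [|lra|lra].
  by apply: ge0_ler_powR; rewrite ?nnegrE; lra.
have XD : (eta - 1) / X <= D.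
  apply: le_trans D_ge; rewrite /X eX.
  have : 0 < (t + 1) `^ (eta - 1) by apply: powR_gt0; lra.
  by move=> ?; rewrite le_eqVlt; apply/orP; left; apply/eqP; field;
    apply/andP; split; rewrite gt_eqF //; lra.
have YX : Y^-1 <= P / X.
  rewrite -subr_ge0.
  have -> : P / X - Y^-1 = (P * Y - X) / (X * Y).
    by field; apply/andP; split; rewrite gt_eqF.
  by apply: divr_ge0; [lra | apply: mulr_ge0; lra].
apply: le_trans YX _; rewrite -subr_ge0.
have -> : P / (eta - 1) * D - P / X = P / (eta - 1) * (D - (eta - 1) / X).
  by field; apply/andP; split; rewrite gt_eqF //; lra.
by apply: mulr_ge0; [apply: divr_ge0|]; lra.
Qed.

Lemma inv_powR_in01 (a s : R) : 1 <= a -> 0 <= s -> 0 < (a `^ s)^-1 <= 1.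
Proof.
move=> a_ge1 s_ge0; have : 1 <= a `^ s by rewrite -(powRr0 a); apply: ler_powR.
by move=> ?; rewrite invr_gt0 invr_le1 ?unitfE; lra.
Qed.

Lemma sum_le_potential (h P : int -> R) (B : R) (c : int) (L : nat) :
  (forall j, h j <= P (j + 1) - P j) -> (forall j, 0 <= P j <= B) ->
  \sum_(k < L) h (k%:Z + c) <= B.
Proof.
move=> hP P_in.
apply: le_trans (_ : _ <= P (L%:Z + c) - P (0%:Z + c)) _; last first.
  by have := P_in (L%:Z + c); have := P_in (0%:Z + c); lra.
rewrite -(telescope_sumr (fun k => P (k%:Z + c))) // big_mkord.
apply: ler_sum => k _; have := hP (k%:Z + c).
by rewrite addrAC -[_ + 1]addrC -intS.
Qed.

Variable eta : R.
Hypothesis eta_gt1 : 1 < eta.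

Definition recip_pow (j : int) : R :=
  if j == 0 then 0 else (`|(j%:~R : R)| `^ eta)^-1.

Definition recip_pow_const : R := 2 `^ eta / (eta - 1).

(* A primitive of recip_pow: on each side of 0 its increments are the
   telescoping differences of inv_powR_le_subD1 taken at |j|. *)
Let Psi (j : int) : R :=
  if j <= 0 then recip_pow_const * ((1 - j%:~R) `^ (eta - 1))^-1
  else 2 * recip_pow_const - recip_pow_const * ((j%:~R : R) `^ (eta - 1))^-1.

Lemma recip_pow_ge0 j : 0 <= recip_pow j.
Proof. by rewrite /recip_pow; case: ifP => // _; rewrite invr_ge0 powR_ge0. Qed.

Lemma recip_pow_const_gt0 : 0 < recip_pow_const.
Proof. by apply: divr_gt0; [apply: powR_gt0 | rewrite subr_gt0]. Qed.

Let Psi_in j : 0 <= Psi j <= 2 * recip_pow_const.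
Proof.
have K_gt0 := recip_pow_const_gt0.
rewrite /Psi; case: ifP => j_le0.
  have /andP[] : 0 < ((1 - j%:~R) `^ (eta - 1))^-1 <= 1.
    apply: inv_powR_in01; [|by rewrite subr_ge0 ltW].
    have : (j%:~R : R) <= 0 by rewrite lerz0.
    lra.
  by move=> *; apply/andP; split; nra.
have /andP[] : 0 < ((j%:~R : R) `^ (eta - 1))^-1 <= 1.
  apply: inv_powR_in01; last by rewrite subr_ge0 ltW.
  by rewrite ler1z -gtz0_ge1 ltNge j_le0.
by move=> *; apply/andP; split; nra.
Qed.

Let recip_pow_le_Psi j : recip_pow j <= Psi (j + 1) - Psi j.
Proof.
rewrite /recip_pow /Psi; case: (ltrgtP j 0) => j0.
- have j_le : (j%:~R : R) <= -1.
    have : ((j + 1)%:~R : R) <= 0 by rewrite lerz0 lezD1.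
    by rewrite intrD; lra.
  rewrite lezD1 j0 ltr0_norm; last lra.
  have := @inv_powR_le_subD1 eta (- j%:~R) eta_gt1 ltac:(lra).
  have -> : 1 - (j + 1)%:~R = - (j%:~R : R) by rewrite intrD; ring.
  by rewrite /recip_pow_const mulrBr [- _ + 1]addrC.
- have j_ge : 1 <= (j%:~R : R) by rewrite ler1z -gtz0_ge1.
  rewrite lezD1 (lt_gtF j0) gtr0_norm; last lra.
  have := @inv_powR_le_subD1 eta _ eta_gt1 j_ge.
  by rewrite /recip_pow_const intrD /= => h; apply: le_trans h _; lra.
- by subst j; rewrite add0r /= subr0 powR1 invr1 mulr1; lra.
Qed.

Lemma sum_recip_pow_le (c : int) (L : nat) :
  \sum_(k < L) recip_pow (k%:Z + c) <= 2 * recip_pow_const.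
Proof. exact: sum_le_potential recip_pow_le_Psi Psi_in. Qed.

End InversePowerSums.

Section SymmetricPartialSums.

Definition window (N : nat) : seq int :=
  [seq k%:Z - N%:Z | k <- index_iota 0 (2 * N).+1].

Lemma window_uniq N : uniq (window N).
Proof. by rewrite map_inj_uniq ?iota_uniq // => a b /addIr []. Qed.

Lemma mem_window (m : int) N : (absz m <= N)%N -> m \in window N.
Proof.
move=> m_le; apply/mapP; exists (absz (m + N%:Z)).
  by rewrite mem_index_iota; lia.
by lia.
Qed.

Lemma big_window (V : zmodType) (F : int -> V) N :
  \sum_(n <- window N) F n = \sum_(k < (2 * N).+1) F (k%:Z - N%:Z).
Proof. by rewrite big_map big_mkord. Qed.

Lemma big_windowS (V : zmodType) (F : int -> V) N :
  \sum_(n <- window N.+1) F n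
  = F (- N.+1%:Z) + \sum_(n <- window N) F n + F N.+1%:Z.
Proof.
rewrite !big_window (_ : (2 * N.+1).+1 = ((2 * N).+1).+2); last by lia.
rewrite big_ord_recl big_ord_recr /= addrA.
congr (F _ + _ + F _); last by rewrite /bump; lia.
- by rewrite add0r.
- by apply: eq_bigr => i _; congr F; rewrite /bump; lia.
Qed.

Variable R : realType.

Lemma sum_window_nondecreasing (F : int -> R) : (forall n, 0 <= F n) ->
  {homo (fun N => \sum_(n <- window N) F n) : a b / (a <= b)%N >-> a <= b}.
Proof.
move=> F_ge0; apply/nondecreasing_seqP => N /=.
by rewrite big_windowS; have := F_ge0 (- N.+1%:Z); have := F_ge0 N.+1%:Z; lra.
Qed.

(* F = (A + F) - A with both A and A + F nonnegative. *)
Lemma is_cvg_sum_window (F A : int -> R) (B : R) :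
  (forall n, `|F n| <= A n) -> (forall N, \sum_(n <- window N) A n <= B) ->
  cvgn (fun N => \sum_(n <- window N) F n).
Proof.
move=> FA A_le.
have AF : forall n, 0 <= A n + F n /\ A n + F n <= A n + A n.
  by move=> n; have := FA n; rewrite ler_norml; lra.
have cvgA : cvgn (fun N => \sum_(n <- window N) A n).
  apply: nondecreasing_is_cvgn; last by exists B => _ [N _ <-].
  by apply: sum_window_nondecreasing => n; exact: le_trans (FA n).
have cvgAF : cvgn (fun N => \sum_(n <- window N) (A n + F n)).
  apply: nondecreasing_is_cvgn.
    by apply: sum_window_nondecreasing => n; case: (AF n).
  exists (B + B) => _ [N _ <-].
  apply: le_trans (_ : _ <= \sum_(n <- window N) (A n + A n)) _.
    by apply: ler_sum => n _; case: (AF n).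
  by rewrite big_split lerD.
rewrite (_ : (fun N => _) = (fun N => \sum_(n <- window N) (A n + F n)
                                       - \sum_(n <- window N) A n)).
  exact: is_cvgB.
by apply: funext => N; rewrite big_split /= addrAC subrr add0r.
Qed.

Lemma norm_sum_sub_le (F G : int -> R) (m : int) (s : seq int) :
  uniq s -> m \in s -> (forall n, n != m -> `|F n| <= G n) ->
  (forall n, 0 <= G n) ->
  `|\sum_(n <- s) F n - F m| <= \sum_(n <- s) G n.
Proof.
move=> s_uniq ms FG G_ge0.
rewrite (bigD1_seq m) //= [F m + _]addrC addrK.
apply: le_trans (ler_norm_sum _ _ _) _.
rewrite [X in _ <= X](bigD1_seq m) //=.
by apply: ler_wpDl => //; apply: ler_sum => n /FG.
Qed.

Lemma sum_norm_le (F G : int -> R) (m : int) (s : seq int) :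
  uniq s -> (forall n, n != m -> `|F n| <= G n) -> (forall n, 0 <= G n) ->
  \sum_(n <- s) `|F n| <= `|F m| + \sum_(n <- s) G n.
Proof.
move=> s_uniq FG G_ge0; have [ms|/negP ms] := boolP (m \in s).
  rewrite (bigD1_seq m) //= [X in _ <= _ + X](bigD1_seq m) //=.
  by apply: lerD => //; apply: ler_wpDl => //; apply: ler_sum => n /FG.
apply: ler_wpDl => //; rewrite big_seq_cond [X in _ <= X]big_seq_cond.
apply: ler_sum => n /andP[ns _]; apply: FG.
by apply: contraTneq ns => ->; apply/negP.
Qed.

Lemma lim_sum_window_sub_le (F G : int -> R) (m : int) (T : R) :
  (forall n, n != m -> `|F n| <= G n) -> (forall n, 0 <= G n) ->
  (forall N, \sum_(n <- window N) G n <= T) ->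
  `|lim ((fun N => \sum_(n <- window N) F n) @ \oo) - F m| <= T.
Proof.
move=> FG G_ge0 G_le.
have cvgF : cvgn (fun N => \sum_(n <- window N) F n).
  apply: (@is_cvg_sum_window _ (fun n => `|F n|) (`|F m| + T)) => // N.
  by apply: le_trans (sum_norm_le (window_uniq N) FG G_ge0) _; rewrite lerD2l.
have near_Fm : \forall N \near \oo,
    `|\sum_(n <- window N) F n - F m| <= T.
  exists (absz m) => // N /= m_le; apply: le_trans (G_le N).
  exact: norm_sum_sub_le (window_uniq N) (mem_window m_le) FG G_ge0.
rewrite ler_norml; apply/andP; split.
  rewrite lerBrDr; apply: limr_ge cvgF _.
  by apply: filterS near_Fm => N; rewrite ler_norml; lra.
rewrite lerBlDr; apply: limr_le cvgF _.
by apply: filterS near_Fm => N; rewrite ler_norml; lra.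
Qed.

End SymmetricPartialSums.

Local Open Scope complex_scope.

Section ComplexSeries.
Variable R : realType.

Lemma cRe_add (x y : R[i]) : cRe (x + y) = cRe x + cRe y.
Proof. by case: x => ? ?; case: y. Qed.

Lemma cIm_add (x y : R[i]) : cIm (x + y) = cIm x + cIm y.
Proof. by case: x => ? ?; case: y. Qed.

Lemma cRe_sub (x y : R[i]) : cRe (x - y) = cRe x - cRe y.
Proof. by case: x => ? ?; case: y. Qed.

Lemma cIm_sub (x y : R[i]) : cIm (x - y) = cIm x - cIm y.
Proof. by case: x => ? ?; case: y. Qed.

Lemma cRe_sum (I : Type) (r : seq I) (F : I -> R[i]) :
  cRe (\sum_(i <- r) F i) = \sum_(i <- r) cRe (F i).
Proof. exact: (big_morph _ cRe_add). Qed.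

Lemma cIm_sum (I : Type) (r : seq I) (F : I -> R[i]) :
  cIm (\sum_(i <- r) F i) = \sum_(i <- r) cIm (F i).
Proof. exact: (big_morph _ cIm_add). Qed.

Lemma cabsM (x y : R[i]) : cabs (x * y) = cabs x * cabs y.
Proof.
case: x => a b; case: y => c d; rewrite /cabs /= -sqrtrM ?addr_ge0 ?sqr_ge0 //.
by congr Num.sqrt; ring.
Qed.

Lemma cabs_ee (x : R) : cabs (ee x) = 1.
Proof. by rewrite /cabs /ee /= cos2Dsin2 sqrtr1. Qed.

Lemma cabs_realC (x : R) : cabs x%:C = `|x|.
Proof. by rewrite /cabs /= expr0n /= addr0 sqrtr_sqr. Qed.

Lemma cabs_ge0 (x : R[i]) : 0 <= cabs x.
Proof. exact: sqrtr_ge0. Qed.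

Lemma norm_cRe_le (x : R[i]) : `|cRe x| <= cabs x.
Proof.
by case: x => a b; rewrite /cabs /= -sqrtr_sqr ler_wsqrtr // lerDl sqr_ge0.
Qed.

Lemma norm_cIm_le (x : R[i]) : `|cIm x| <= cabs x.
Proof.
by case: x => a b; rewrite /cabs /= -sqrtr_sqr ler_wsqrtr // lerDr sqr_ge0.
Qed.

Lemma cabs_le_norm_cRe_cIm (x : R[i]) : cabs x <= `|cRe x| + `|cIm x|.
Proof.
case: x => a b; rewrite /cabs /= -[X in _ <= X]ger0_norm ?addr_ge0 //.
rewrite -sqrtr_sqr ler_wsqrtr // sqrrD !real_normK ?num_real //.
by have := normr_ge0 a; have := normr_ge0 b; nra.
Qed.

Lemma eeD (a b : R) : ee (a + b) = ee a * ee b.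
Proof. by rewrite /ee /= !mulrDr cosD sinD; congr (_ +i* _); ring. Qed.

Lemma cabs_zseries_sub_le (a : int -> R[i]) (G : int -> R) (m : int) (T : R) :
  (forall n, n != m -> cabs (a n) <= G n) -> (forall n, 0 <= G n) ->
  (forall N, \sum_(n <- window N) G n <= T) ->
  cabs (zseries a - a m) <= T + T.
Proof.
move=> aG G_ge0 G_le; apply: le_trans (cabs_le_norm_cRe_cIm _) _.
rewrite /zseries /psum cRe_sub cIm_sub /=.
under eq_fun do rewrite -big_window cRe_sum.
under [X in _ + `|lim (X @ _) - _|]eq_fun do rewrite -big_window cIm_sum.
apply: lerD; apply: lim_sum_window_sub_le G_ge0 G_le => n /aG.
- exact: le_trans (norm_cRe_le _).
- exact: le_trans (norm_cIm_le _).
Qed.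

End ComplexSeries.

Section ThetaSum.
Variable R : realType.
Implicit Types (eta y : R) (f : R -> R).

Lemma frot_mul_le_kappa eta f phi w : in_S eta f ->
  cabs (frot f phi w) * (1 + `|w|) `^ eta <= kappa eta f.
Proof.
move=> [M f_le]; apply: sup_upper_bound; last by exists w, phi.
split; first by exists (cabs (frot f phi w) * (1 + `|w|) `^ eta), w, phi.
by exists M => _ [w' [phi' ->]].
Qed.

Lemma kappa_ge0 eta f : in_S eta f -> 0 <= kappa eta f.
Proof.
move=> /(frot_mul_le_kappa 0 0); apply: le_trans.
by apply: mulr_ge0; [exact: cabs_ge0 | exact: powR_ge0].
Qed.

Lemma frot_le_kappa eta f phi w : in_S eta f ->
  cabs (frot f phi w) <= kappa eta f / (1 + `|w|) `^ eta.
Proof.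
move=> /(frot_mul_le_kappa phi w).
by rewrite ler_pdivlMr //; apply: powR_gt0; have := normr_ge0 w; lra.
Qed.

Lemma inv_powR_lattice_le eta y (theta : R) (j : int) :
  0 <= eta -> 0 < y -> `|theta| <= 1/2 -> j != 0 ->
  ((1 + `|(j%:~R - theta) * Num.sqrt y|) `^ eta)^-1
    <= 2 `^ eta / y `^ (eta / 2) * recip_pow eta j.
Proof.
move=> eta_ge0 y_gt0 theta_le j_neq0.
set w := (j%:~R - theta) * Num.sqrt y; set rj := (j%:~R : R).
have rj_ge1 : 1 <= `|rj| by rewrite -intr_norm ler1z -gtz0_ge1 normr_gt0.
have sqrt_ge0 : 0 <= Num.sqrt y := sqrtr_ge0 y.
have rj_le : `|rj| * Num.sqrt y <= 2 * (1 + `|w|).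
  have : `|rj| <= `|rj - theta| + `|theta|.
    by rewrite -[X in `|X| <= _](subrK theta) ler_normD.
  rewrite /w normrM (ger0_norm sqrt_ge0).
  by have := normr_ge0 (rj - theta); nra.
have pow_le : `|rj| `^ eta * y `^ (eta / 2) <= 2 `^ eta * (1 + `|w|) `^ eta.
  have -> : y `^ (eta / 2) = Num.sqrt y `^ eta.
    by rewrite -powR12_sqrt ?(ltW y_gt0) // -powRrM mulrC.
  rewrite -!powRM ?normr_ge0 //.
  by apply: ge0_ler_powR; rewrite ?nnegrE //; apply: mulr_ge0.
rewrite /recip_pow (negbTE j_neq0) -/rj.
have Z_gt0 : 0 < (1 + `|w|) `^ eta by apply: powR_gt0; have := normr_ge0 w; lra.
have Q_gt0 : 0 < `|rj| `^ eta by apply: powR_gt0; lra.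
have Y_gt0 : 0 < y `^ (eta / 2) := powR_gt0 _ y_gt0.
rewrite -subr_ge0.
have -> : 2 `^ eta / y `^ (eta / 2) * (`|rj| `^ eta)^-1 - ((1 + `|w|) `^ eta)^-1
    = (2 `^ eta * (1 + `|w|) `^ eta - `|rj| `^ eta * y `^ (eta / 2))
      / (`|rj| `^ eta * y `^ (eta / 2) * (1 + `|w|) `^ eta).
  by field; apply/and3P; split; rewrite gt_eqF.
by apply: divr_ge0; [lra | apply: mulr_ge0; [apply: mulr_ge0|]; lra].
Qed.

End ThetaSum.

Theorem lemma2p1 (R : realType) (eta : R) (heta : 1 < eta) :
  exists C : R, forall (f : R -> R),
    measurable_fun [set: R] f -> in_S eta f ->
    forall (y x phi xi1 xi2 zeta : R), 1/2 <= y ->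
    let m : int := Num.floor (xi2 + 1/2) in
    let theta : R := xi2 - m%:~R in
    cabs (Theta f x y phi xi1 xi2 zeta
          - (y `^ (1/4))%:C
            * ee (zeta + ((m%:~R - theta) * xi1 + theta ^+ 2 * x) / 2)
            * frot f phi (- theta * Num.sqrt y))
    <= C * kappa eta f * y `^ (- (2 * eta - 1) / 4).
Proof.
exists (4 * recip_pow_const eta * 2 `^ eta).
move=> f _ f_S y x phi xi1 xi2 zeta y_ge; cbv zeta.
set m := Num.floor _; set theta := xi2 - _.
have y_gt0 : 0 < y by lra.
have theta_le : `|theta| <= 1/2.
  have := floor_le (xi2 + 1/2); have := floorD1_gt (xi2 + 1/2).
  by rewrite -/m intrD ler_norml /theta; lra.
pose a n := frot f phi ((n%:~R - xi2) * Num.sqrt y)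
            * ee ((1/2) * (n%:~R - xi2) ^+ 2 * x + n%:~R * xi1).
pose c := kappa eta f * 2 `^ eta / y `^ (eta / 2).
have c_ge0 : 0 <= c.
  by rewrite /c !mulr_ge0 ?invr_ge0 ?powR_ge0 ?kappa_ge0.
have a_le n : n != m -> cabs (a n) <= c * recip_pow eta (n - m).
  move=> n_neq; rewrite cabsM cabs_ee mulr1.
  apply: le_trans (frot_le_kappa _ _ f_S) _.
  rewrite /c -!mulrA ler_wpM2l ?kappa_ge0 // mulrA.
  have -> : n%:~R - xi2 = (n - m)%:~R - theta by rewrite /theta intrB; ring.
  by apply: inv_powR_lattice_le; rewrite ?subr_eq0 //; lra.
have G_le N : \sum_(n <- window N) c * recip_pow eta (n - m)
    <= c * (2 * recip_pow_const eta).
  rewrite big_window -mulr_sumr ler_wpM2l //.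
  under eq_bigr do rewrite -addrA.
  exact: sum_recip_pow_le.
have main_term : ee (zeta + ((m%:~R - theta) * xi1 + theta ^+ 2 * x) / 2)
    * frot f phi (- theta * Num.sqrt y) = ee (zeta - (1/2) * xi1 * xi2) * a m.
  rewrite /a mulrCA -eeD mulrC.
  by congr (frot _ _ _ * ee _); rewrite /theta; [ring | field].
have zseries_le := ler_wpM2l (powR_ge0 y (1/4))
  (cabs_zseries_sub_le a_le (fun n => mulr_ge0 c_ge0 (recip_pow_ge0 _ _)) G_le).
rewrite /Theta -/a -[_ * _ * frot _ _ _]mulrA main_term mulrA -mulrBr.
rewrite !cabsM cabs_realC cabs_ee mulr1 ger0_norm ?powR_ge0 //.
have -> : y `^ (- (2 * eta - 1) / 4) = y `^ (1/4) / y `^ (eta / 2).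
  rewrite -powRN -powRD ?(gt_eqF y_gt0) ?implybT //.
  by apply: congr1; field.
apply: le_trans zseries_le _; rewrite le_eqVlt; apply/orP; left; apply/eqP.
by rewrite /c; ring.
Qed.
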